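(* Let $p\ge 7$ be a prime and $k$ an integer with $(p+2)/3\le k\le p-3$. Then \[ k+1\le \mathsf{BO}(k,\mathbb{Z}/p\mathbb{Z})\le k+2. \]
   Context: For a positive integer $k$, a set $\{g_1,\dots,g_k\}$ of $k$ distinct elements of a finite abelian group $G$ (written additively) is called $k$-barycentric if $\sum_{i=1}^k g_i = k\,g_j$ for some $1\le j\le k$. The $k$-th barycentric Olson constant $\mathsf{BO}(k,G)$ is the smallest integer $\ell$ such that every subset $A\subseteq G$ with $|A|\ge \ell$ contains a $k$-barycentric subset (so that always $\mathsf{BO}(k,G)\le |G|+1$). *)

From HB Require Import structures.
From mathcomp Require Import all_boot all_order all_algebra.
Set Implicit Arguments. Unset Strict Implicit. Unset Printing Implicit Defensive.
Import GRing.Theory.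
Local Open Scope ring_scope.

Definition barycentric (G : finZmodType) (k : nat) (B : {set G}) : bool :=
  (#|B| == k)%N && [exists g in B, \sum_(x in B) x == g *+ k].

Definition has_barycentric (G : finZmodType) (k : nat) (A : {set G}) : bool :=
  [exists B : {set G}, (B \subset A) && barycentric k B].

Definition BO_prop (G : finZmodType) (k l : nat) : bool :=
  [forall A : {set G}, (l <= #|A|)%N ==> has_barycentric k A].

Lemma BO_prop_ex (G : finZmodType) (k : nat) : exists l, BO_prop G k l.
Proof.
exists (#|G|.+1); apply/forallP => A; apply/implyP => H.
by move: (max_card A); rewrite leqNgt H.
Qed.

Definition BO (G : finZmodType) (k : nat) : nat := ex_minn (BO_prop_ex G k).

(* Lower bound: the complement A of {0} u C, where C is a zero-sum set of p-1-k
   nonzero residues, has k elements and sum 0; its only k-subset is A itself,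
   and sum A = k g would force g = 0, which is not in A.

   Upper bound: after a translation, a (k+2)-set A may be assumed to have sum 0,
   and it suffices to find distinct x, y, g in A with x + y + k g = 0, for then
   A minus {x, y} is barycentric with respect to g.  Such a triple comes from
   the Combinatorial Nullstellensatz in its coefficient form: for grids of
   sizes a+1, b+1, c+1, the sum of f over A1 x A2 x A3 weighted by the inverse
   Lagrange denominators is the coefficient of x^a y^b z^c of any polynomial f
   of degree at most a + b + c.  We apply it to
   (x - y)(x - z)(y - z)((x + y + k z)^(p-1) - 1), of degree p + 2, whose
   value on the grid vanishes by Fermat if there is no triple, while for
   suitably chosen a + b + c = p + 2 its top coefficient is nonzero. *)

From mathcomp Require Import all_boot all_order all_algebra.
From mathcomp Require Import finfield zify ring.
Set Implicit Arguments. Unset Strict Implicit. Unset Printing Implicit Defensive.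
Import GRing.Theory.
Local Open Scope ring_scope.

Lemma trinomial_expand (R : comNzRingType) (x y z t : R) (m : nat) :
  (x + y + t * z) ^+ m = \sum_(i < m.+1) \sum_(j < (m - i).+1)
    ('C(m, i) * 'C(m - i, j))%:R * t ^+ i * (x ^+ (m - i - j) * y ^+ j * z ^+ i).
Proof.
rewrite exprDn; apply: eq_bigr => -[i /= _] _; rewrite exprDn.
rewrite -mulr_natr !mulr_suml; apply: eq_bigr => -[j /= _] _.
rewrite exprMn natrM; ring.
Qed.

(* The multinomial coefficient m! / ((a-e1)! (b-e2)! (c-e3)!) written with
   binomials and cleared of denominators. *)
Lemma binomial2_fact (m a b c e1 e2 e3 : nat) :
  (e1 <= a)%N -> (e2 <= b)%N -> (e3 <= c)%N -> (a + b + c = m + e1 + e2 + e3)%N ->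
  ('C(m, c - e3) * 'C(m - (c - e3), b - e2) * (a`! * b`! * c`!) =
   m`! * (a ^_ e1 * b ^_ e2 * c ^_ e3))%N.
Proof.
move=> e1_le e2_le e3_le deg.
rewrite -(ffact_fact e1_le) -(ffact_fact e2_le) -(ffact_fact e3_le).
have E1 := @bin_fact m (c - e3) (ltac:(lia)).
have E2 := @bin_fact (m - (c - e3)) (b - e2) (ltac:(lia)).
rewrite (_ : m - (c - e3) - (b - e2) = a - e1)%N in E2; last by lia.
rewrite -E1 -E2; ring.
Qed.

Lemma subset_of_card (T : finType) (A : {set T}) (n : nat) : (n <= #|A|)%N ->
  exists2 B : {set T}, B \subset A & #|B| = n.
Proof.
move=> n_le; exists [set x in take n (enum A)].
  by apply/subsetP => x; rewrite inE => /mem_take; rewrite mem_enum.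
have take_uniq : uniq (take n (enum A)) by rewrite take_uniq ?enum_uniq.
by rewrite cardsE (card_uniqP take_uniq) size_takel // -cardE.
Qed.

Section InterpolationWeights.
Variable F : finFieldType.

Lemma expf_card_pred (w : F) : w != 0 -> w ^+ #|F|.-1 = 1.
Proof.
move=> w_nz; apply: (mulfI w_nz); rewrite mulr1 -exprS prednK ?expf_card //.
exact: ltnW (finNzRing_gt1 F).
Qed.



Definition interp_weight (A : {set F}) (x : F) : F :=
  (\prod_(y in A :\ x) (x - y))^-1.

(* The weighted sum of x ^+ e over A is the coefficient of 'X^(#|A|-1) in the
   interpolation polynomial of 'X^e on A, i.e. 'X^e itself when e < #|A|. *)
Lemma sum_interp_weight (A : {set F}) (e : nat) : (e < #|A|)%N ->
  \sum_(x in A) x ^+ e * interp_weight A x = (e == #|A|.-1)%:R.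
Proof.
move=> e_lt; pose node x : {poly F} := \prod_(y in A :\ x) ('X - y%:P).
have node_size x : x \in A -> size (node x) = #|A|.
  move=> xA; rewrite /node -big_enum size_prod_XsubC -cardE.
  by rewrite [in RHS](cardsD1 x A) xA.
have node_monic x : node x \is monic by rewrite /node -big_enum monic_prod_XsubC.
have node_eval x z : (node x).[z] = \prod_(y in A :\ x) (z - y).
  by rewrite /node -big_enum horner_prod big_enum; apply: eq_bigr => y _; rewrite hornerXsubC.
pose q := \sum_(x in A) (x ^+ e * interp_weight A x) *: node x.
have q_interp z : z \in A -> q.[z] = z ^+ e.
  move=> zA; rewrite horner_sum (bigD1 z) //= big1 ?addr0.
    rewrite hornerZ node_eval /interp_weight -mulrA mulVf ?mulr1 //.
    by apply/prodf_neq0 => y; rewrite !inE subr_eq0 eq_sym => /andP[].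
  move=> y /andP[yA yz]; rewrite hornerZ node_eval (bigD1 z) /=.
    by rewrite subrr mul0r mulr0.
  by rewrite !inE zA andbT eq_sym.
have qE : q = 'X^e.
  apply/eqP; rewrite -subr_eq0; apply/eqP.
  apply: (@roots_geq_poly_eq0 _ _ (enum A)); last 1 first.
  - rewrite -cardE; apply: leq_trans (size_polyD _ _) _.
    rewrite geq_max size_polyN size_polyXn e_lt andbT.
    apply: leq_trans (size_sum _ _ _) _; apply/bigmax_leqP => x xA.
    by apply: leq_trans (size_scale_leq _ _) _; rewrite node_size.
  - apply/allP => z; rewrite mem_enum => zA.
    by rewrite /root !hornerE q_interp // subrr.
  - exact: enum_uniq.
have := congr1 (fun r : {poly F} => r`_(#|A|.-1)) qE.
rewrite coef_sum coefXn /= eq_sym => <-; apply: eq_bigr => x xA.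
have := node_monic x; rewrite monicE /lead_coef node_size // => /eqP.
by rewrite coefZ => ->; rewrite mulr1.
Qed.

Lemma sum_interp_weight_low (A : {set F}) (e : nat) : (e < #|A|.-1)%N ->
  \sum_(x in A) x ^+ e * interp_weight A x = 0.
Proof.
move=> e_lt; rewrite sum_interp_weight ?(ltn_eqF e_lt) //.
exact: leq_trans e_lt (leq_pred _).
Qed.

Section NullstellensatzFunctional.
Variables A1 A2 A3 : {set F}.

(* For a polynomial f of total
   degree at most #|A1| + #|A2| + #|A3| - 3 it extracts the coefficient of the
   top monomial (this is the Combinatorial Nullstellensatz in coefficient form). *)
Definition cn_sum (f : F -> F -> F -> F) : F :=
  \sum_(x in A1) \sum_(y in A2) \sum_(z in A3)
    f x y z * (interp_weight A1 x * interp_weight A2 y * interp_weight A3 z).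

Lemma eq_cn_sum (f g : F -> F -> F -> F) :
  (forall x y z, x \in A1 -> y \in A2 -> z \in A3 -> f x y z = g x y z) ->
  cn_sum f = cn_sum g.
Proof.
move=> fg; apply: eq_bigr => x xA; apply: eq_bigr => y yA; apply: eq_bigr => z zA.
by rewrite fg.
Qed.

Lemma cn_sum_big (I : Type) (r : seq I) (P : pred I) (f : I -> F -> F -> F -> F) :
  cn_sum (fun x y z => \sum_(i <- r | P i) f i x y z) = \sum_(i <- r | P i) cn_sum (f i).
Proof.
rewrite /cn_sum; symmetry; rewrite exchange_big; apply: eq_bigr => x _.
rewrite exchange_big; apply: eq_bigr => y _; rewrite exchange_big; apply: eq_bigr => z _.
exact: esym (mulr_suml _ _ _ _).
Qed.

Lemma cn_sumZ (c : F) (f : F -> F -> F -> F) :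
  cn_sum (fun x y z => c * f x y z) = c * cn_sum f.
Proof.
rewrite /cn_sum mulr_sumr; apply: eq_bigr => x _; rewrite mulr_sumr; apply: eq_bigr => y _.
rewrite mulr_sumr; apply: eq_bigr => z _; exact: esym (mulrA _ _ _).
Qed.

Lemma cn_sumB (f g : F -> F -> F -> F) :
  cn_sum (fun x y z => f x y z - g x y z) = cn_sum f - cn_sum g.
Proof.
rewrite /cn_sum -sumrB; apply: eq_bigr => x _; rewrite -sumrB; apply: eq_bigr => y _.
by rewrite -sumrB; apply: eq_bigr => z _; rewrite mulrBl.
Qed.

(* The polynomial whose coefficient is extracted: a Vandermonde factor forcing
   x, y, z to be distinct, times a factor vanishing unless x + y + t z = 0. *)
Definition vdm_form (t : F) (m : nat) (x y z : F) : F :=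
  (x - y) * (x - z) * (y - z) * ((x + y + t * z) ^+ m - 1).

(* Up to nonzero factors, the top coefficient of vdm_form is (a - b) times
   this discriminant (see cn_sum_vdm_value). *)
Definition triple_discr (t a b c : F) : F :=
  t ^+ 2 * a * b + c * (c - 1) - t * c * (a + b - 1).

Lemma triple_discr_shift (t a b c : F) :
  triple_discr t (a + 1) (b - 1) c - triple_discr t a b c = t ^+ 2 * (b - a - 1).
Proof. by rewrite /triple_discr; ring. Qed.

Lemma cn_sum_vdm_vanish (t : F) :
  (forall x y z, x \in A1 -> y \in A2 -> z \in A3 ->
     x != y -> x != z -> y != z -> x + y + t * z != 0) ->
  cn_sum (vdm_form t #|F|.-1) = 0.
Proof.
move=> no_triple; rewrite (@eq_cn_sum _ (fun _ _ _ => 0)); last first.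
  move=> x y z xA yA zA; rewrite /vdm_form.
  have [->|xy] := eqVneq x y; first by rewrite subrr !mul0r.
  have [->|xz] := eqVneq x z; first by rewrite subrr !(mul0r, mulr0).
  have [->|yz] := eqVneq y z; first by rewrite subrr !(mul0r, mulr0).
  by rewrite expf_card_pred ?no_triple // subrr mulr0.
by rewrite /cn_sum big1 // => x _; rewrite big1 // => y _; rewrite big1 // => z _; rewrite mul0r.
Qed.

Variables a b c : nat.
Hypotheses (card_A1 : #|A1| = a.+1) (card_A2 : #|A2| = b.+1) (card_A3 : #|A3| = c.+1).

Lemma cn_sum_monomial (i j l : nat) : (i + j + l <= a + b + c)%N ->
  cn_sum (fun x y z => x ^+ i * y ^+ j * z ^+ l) = ((i == a) && (j == b) && (l == c))%:R.
Proof.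
move=> deg_le.
have -> : cn_sum (fun x y z => x ^+ i * y ^+ j * z ^+ l) =
    (\sum_(x in A1) x ^+ i * interp_weight A1 x) * (\sum_(y in A2) y ^+ j * interp_weight A2 y) *
    (\sum_(z in A3) z ^+ l * interp_weight A3 z).
  rewrite /cn_sum -mulrA mulr_suml; apply: eq_bigr => x _.
  rewrite mulr_suml mulr_sumr; apply: eq_bigr => y _.
  rewrite !mulr_sumr; apply: eq_bigr => z _; ring.
have [i_lt|i_ge] := ltnP i a.
  by rewrite sum_interp_weight_low ?card_A1 // !mul0r (ltn_eqF i_lt).
have [j_lt|j_ge] := ltnP j b.
  by rewrite (sum_interp_weight_low (A := A2)) ?card_A2 // mulr0 mul0r (ltn_eqF j_lt) andbF.
have [l_lt|l_ge] := ltnP l c.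
  by rewrite (sum_interp_weight_low (A := A3)) ?card_A3 // mulr0 (ltn_eqF l_lt) andbF.
have [-> -> ->] : [/\ i = a, j = b & l = c] by split; lia.
by rewrite !sum_interp_weight ?card_A1 ?card_A2 ?card_A3 // !eqxx !mulr1.
Qed.

(* On a monomial times a power of the linear form x + y + t z, of total degree
   exactly a + b + c, only one term of the trinomial expansion survives. *)
Lemma cn_sum_term (t : F) (e1 e2 e3 m : nat) :
  (e1 <= a)%N -> (e2 <= b)%N -> (e3 <= c)%N -> (a + b + c = m + e1 + e2 + e3)%N ->
  cn_sum (fun x y z => x ^+ e1 * y ^+ e2 * z ^+ e3 * (x + y + t * z) ^+ m) =
  ('C(m, c - e3) * 'C(m - (c - e3), b - e2))%:R * t ^+ (c - e3).
Proof.
move=> e1_le e2_le e3_le deg.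
pose coef i j : F := ('C(m, i) * 'C(m - i, j))%:R * t ^+ i.
rewrite (@eq_cn_sum _ (fun x y z => \sum_(i < m.+1) \sum_(j < (m - i).+1)
    coef i j * (x ^+ (e1 + (m - i - j)) * y ^+ (e2 + j) * z ^+ (e3 + i)))); last first.
  move=> x y z _ _ _; rewrite trinomial_expand mulr_sumr; apply: eq_bigr => i _.
  rewrite mulr_sumr; apply: eq_bigr => j _; rewrite /coef !exprD; ring.
have i0_lt : (c - e3 < m.+1)%N by lia.
have j0_lt : (b - e2 < (m - (c - e3)).+1)%N by lia.
rewrite cn_sum_big (bigD1 (Ordinal i0_lt)) //= big1 ?addr0 => [|i i_ne]; last first.
  rewrite cn_sum_big big1 // => j _; rewrite cn_sumZ cn_sum_monomial; last first.
    by have := ltn_ord i; have := ltn_ord j; lia.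
  suff /negPf-> : (e3 + i != c)%N by rewrite andbF mulr0.
  by apply: contra i_ne => /eqP e3i; apply/eqP/val_inj => /=; lia.
rewrite cn_sum_big (bigD1 (Ordinal j0_lt)) //= big1 ?addr0 => [|j j_ne]; last first.
  rewrite cn_sumZ cn_sum_monomial; last by have := ltn_ord j; lia.
  suff /negPf-> : (e2 + j != b)%N by rewrite andbF andFb mulr0.
  by apply: contra j_ne => /eqP e2j; apply/eqP/val_inj => /=; lia.
rewrite cn_sumZ cn_sum_monomial; last by lia.
have [-> -> ->] : [/\ e1 + (m - (c - e3) - (b - e2)) = a, e2 + (b - e2) = b
                  & e3 + (c - e3) = c]%N by split; lia.
by rewrite !eqxx mulr1.
Qed.

Lemma cn_sum_term_fact (t : F) (e1 e2 e3 m : nat) :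
  (e1 <= a)%N -> (e2 <= b)%N -> (e3 <= c)%N -> (a + b + c = m + e1 + e2 + e3)%N ->
  cn_sum (fun x y z => x ^+ e1 * y ^+ e2 * z ^+ e3 * (x + y + t * z) ^+ m)
    * (a`! * b`! * c`!)%:R = (m`! * (a ^_ e1 * b ^_ e2 * c ^_ e3))%:R * t ^+ (c - e3).
Proof.
move=> e1_le e2_le e3_le deg; rewrite cn_sum_term // mulrAC -natrM.
by rewrite (binomial2_fact e1_le e2_le e3_le deg).
Qed.

(* The top coefficient of vdm_form, cleared of factorials: expanding the
   Vandermonde factor into six monomials, each contributes by cn_sum_term_fact
   while the monomials alone have too small a degree to contribute. *)
Lemma cn_sum_vdm_value (t : F) (m : nat) :
  (2 <= a)%N -> (2 <= b)%N -> (2 <= c)%N -> (a + b + c = m + 3)%N ->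
  cn_sum (vdm_form t m) * (a`! * b`! * c`!)%:R =
  (m`!)%:R * t ^+ (c - 2) * ((a%:R - b%:R) * triple_discr t a%:R b%:R c%:R).
Proof.
move=> a_ge b_ge c_ge deg.
pose mono (e : nat * nat * nat) x y z : F := x ^+ e.1.1 * y ^+ e.1.2 * z ^+ e.2.
pose w x y z : F := x + y + t * z.
have term e1 e2 e3 : (e1 <= 2)%N -> (e2 <= 2)%N -> (e3 <= 2)%N -> (e1 + e2 + e3 = 3)%N ->
    cn_sum (fun x y z => mono (e1, e2, e3) x y z * w x y z ^+ m - mono (e1, e2, e3) x y z)
      * (a`! * b`! * c`!)%:R = (m`! * (a ^_ e1 * b ^_ e2 * c ^_ e3))%:R * t ^+ (c - e3).
  move=> e1_le e2_le e3_le e_sum.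
  rewrite cn_sumB mulrBl /mono /w /= cn_sum_term_fact ?cn_sum_monomial; try lia.
  suff /negPf-> : ~~ ((e1 == a) && (e2 == b) && (e3 == c)) by rewrite mul0r subr0.
  by apply/negP => /andP[/andP[/eqP ? /eqP ?] /eqP ?]; lia.
pose vdm_terms : seq (nat * nat * nat * F) :=
  [:: ((2, 1, 0)%N, 1); ((1, 2, 0)%N, -1); ((2, 0, 1)%N, -1); ((1, 0, 2)%N, 1);
      ((0, 2, 1)%N, 1); ((0, 1, 2)%N, -1)].
rewrite (@eq_cn_sum _ (fun x y z => \sum_(s <- vdm_terms) s.2 *
    (mono s.1 x y z * w x y z ^+ m - mono s.1 x y z))); last first.
  by move=> x y z _ _ _; rewrite /vdm_form !big_cons big_nil /mono /w /=; ring.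
rewrite cn_sum_big !big_cons big_nil /= !cn_sumZ addr0 !mulrDl -!mulrA !term //.
have ff2 n : (n ^_ 2 = n * (n - 1))%N by rewrite ffactnSr ffactn1.
rewrite !ff2 !ffactn1 !ffactn0 !natrM !natrB; try lia.
have [c' ->] : exists c', c = c'.+2 by exists c.-2; lia.
rewrite /triple_discr !subSS !subn0 !exprS expr0; ring.
Qed.

End NullstellensatzFunctional.

End InterpolationWeights.


Lemma has_barycentric_of_triple (G : finZmodType) (k : nat) (A : {set G}) (x y g : G) :
  #|A| = k.+2 -> x \in A -> y \in A -> g \in A -> x != y -> x != g -> y != g ->
  x + y + g *+ k = \sum_(z in A) z -> has_barycentric k A.
Proof.
move=> card_A xA yA gA xy xg yg sum_eq.
have yAx : y \in A :\ x by rewrite !inE eq_sym xy.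
apply/existsP; exists (A :\ x :\ y).
rewrite (subset_trans (subD1set _ y) (subD1set _ x)) /barycentric.
have -> : #|A :\ x :\ y| = k.
  by move: (cardsD1 x A) (cardsD1 y (A :\ x)); rewrite xA yAx card_A; lia.
rewrite eqxx; apply/existsP; exists g; rewrite !inE eq_sym yg eq_sym xg gA /=.
apply/eqP/(addrI (x + y)); rewrite sum_eq (big_setD1 x xA) (big_setD1 y yAx) /=.
by rewrite addrA.
Qed.

Lemma has_barycentricS (G : finZmodType) (k : nat) (A A' : {set G}) :
  A \subset A' -> has_barycentric k A -> has_barycentric k A'.
Proof.
move=> sub /existsP[B /andP[B_sub bary]].
by apply/existsP; exists B; rewrite bary (subset_trans B_sub).
Qed.

Section PrimeField.
Variable p : nat.
Hypothesis p_prime : prime p.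

Lemma natFp_neq0 (n : nat) : (0 < n < p)%N -> (n%:R : 'F_p) != 0.
Proof.
case/andP=> n_gt0 n_lt; rewrite -(dvdn_pcharf (pchar_Fp p_prime)).
by apply/negP => /(dvdn_leq n_gt0); rewrite leqNgt n_lt.
Qed.

(* Wilson's theorem: (p - 1)! = -1 in F_p, in particular it is nonzero. *)
Lemma fact_pred_Fp_neq0 : ((p.-1)`!%:R : 'F_p) != 0.
Proof.
apply/eqP => fact0.
have : (p %| ((p.-1)`!).+1)%N by rewrite -Wilson ?prime_gt1.
by rewrite (dvdn_pcharf (pchar_Fp p_prime)) -natr1 fact0 add0r oner_eq0.
Qed.

(* For p odd, the elements of F_p sum to zero: x and -x cancel. *)
Lemma sum_Fp : (2 < p)%N -> \sum_(x : 'F_p) x = 0.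
Proof.
move=> p_gt2; have two_nz : (2%:R : 'F_p) != 0 by apply: natFp_neq0; lia.
have sumN : \sum_(x : 'F_p) x = - \sum_(x : 'F_p) x.
  by rewrite {1}(reindex_inj oppr_inj) /= sumrN.
have : (\sum_(x : 'F_p) x) * 2%:R == 0 by rewrite mulr_natr mulr2n {1}sumN addNr.
by rewrite mulf_eq0 (negPf two_nz) orbF => /eqP.
Qed.

Lemma zero_sum_set_of_seq (s : seq nat) : uniq s -> all (fun n => 0 < n < p)%N s ->
  (p %| sumn s)%N -> exists C : {set 'F_p}, [/\ 0 \notin C, #|C| = size s & \sum_(x in C) x = 0].
Proof.
move=> s_uniq s_range p_dvd.
have cast_inj : {in s &, injective (fun n => n%:R : 'F_p)}.
  move=> n n' /(allP s_range)/andP[_ n_lt] /(allP s_range)/andP[_ n'_lt] cast_eq.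
  by have := val_Fp_nat p_prime n; rewrite cast_eq val_Fp_nat // !modn_small.
have cast_uniq : uniq [seq n%:R : 'F_p | n <- s] by rewrite map_inj_in_uniq.
exists [set x in [seq n%:R : 'F_p | n <- s]]; split.
- rewrite inE; apply/mapP => -[n /(allP s_range) n_range /eqP].
  by rewrite eq_sym (negPf (natFp_neq0 n_range)).
- by rewrite cardsE (card_uniqP cast_uniq) size_map.
- rewrite (eq_bigl (mem [seq n%:R : 'F_p | n <- s])) => [|x]; last by rewrite inE.
  rewrite -big_uniq // big_map -natr_sum -sumnE; apply/eqP.
  by rewrite -(dvdn_pcharf (pchar_Fp p_prime)).
Qed.

Definition symmetric_residues (u : nat) : seq nat :=
  [seq i.+1 | i <- iota 0 u] ++ [seq (p - i.+1)%N | i <- iota 0 u].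

Lemma mem_symmetric_residues (u n : nat) : (2 * u < p)%N ->
  n \in symmetric_residues u -> ((0 < n <= u) || (p - u <= n < p))%N.
Proof.
by move=> u_lt; rewrite mem_cat => /orP[] /mapP[i]; rewrite mem_iota => i_lt ->; lia.
Qed.

Lemma symmetric_residues_uniq (u : nat) : (2 * u < p)%N -> uniq (symmetric_residues u).
Proof.
move=> u_lt; rewrite cat_uniq; apply/and3P; split.
- by rewrite map_inj_uniq ?iota_uniq // => i j [].
- apply/hasPn => n /mapP[i]; rewrite mem_iota => i_lt ->.
  by apply/mapP => -[j]; rewrite mem_iota => j_lt; lia.
- by rewrite map_inj_in_uniq ?iota_uniq // => i j; rewrite !mem_iota; lia.
Qed.

Lemma sum_symmetric_residues (u : nat) : (2 * u < p)%N ->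
  sumn (symmetric_residues u) = (u * p)%N.
Proof.
move=> u_lt; rewrite sumn_cat !sumnE !big_map -big_split /=.
rewrite (eq_big_seq (fun _ => p)) => [|i]; last by rewrite mem_iota; lia.
by rewrite -{1}(subn0 u) sum_nat_const_nat subn0.
Qed.

Lemma size_symmetric_residues (u : nat) : size (symmetric_residues u) = (2 * u)%N.
Proof. by rewrite size_cat !size_map size_iota; lia. Qed.

(* Zero-sum sets of nonzero residues of every size s with 2 <= s <= (2p - 5)/3:
   with u = s/2, the pairs {i, -i} for i <= u, or for odd s the pairs with
   i < u completed by the zero-sum triple {u, u + 1, -(2u + 1)}. *)
Lemma exists_zero_sum_set (s : nat) : (2 <= s)%N -> (3 * s + 5 <= 2 * p)%N ->
  exists C : {set 'F_p}, [/\ 0 \notin C, #|C| = s & \sum_(x in C) x = 0].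
Proof.
move=> s_ge s_le; set u := s./2.
have s_eq : s = (odd s + 2 * u)%N by rewrite /u -{1}(odd_double_half s) -mul2n.
have u_lt : (2 * u < p)%N by lia.
have sym_range : all (fun n => 0 < n < p)%N (symmetric_residues u).
  by apply/allP => n /(mem_symmetric_residues u_lt); lia.
case/boolP: (odd s) s_eq => _; rewrite ?add0n ?add1n => s_eq; last first.
  have [|C [C0 card_C sum_C]] := zero_sum_set_of_seq (symmetric_residues_uniq u_lt) sym_range.
    by rewrite sum_symmetric_residues ?dvdn_mull.
  by exists C; split=> //; rewrite card_C size_symmetric_residues; lia.
pose triple := [:: u; u.+1; (p - (2 * u).+1)%N].
have pairs_u : (2 * u.-1 < p)%N by lia.
have [|||C [C0 card_C sum_C]] := @zero_sum_set_of_seq (symmetric_residues u.-1 ++ triple).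
- rewrite cat_uniq symmetric_residues_uniq //= !inE !negb_or -!andbA.
  apply/and5P; split; try (apply/negP => /(mem_symmetric_residues pairs_u); lia); lia.
- rewrite all_cat /= !andbT; apply/and4P; split; try lia.
  by apply/allP => n /(mem_symmetric_residues pairs_u); lia.
- rewrite sumn_cat sum_symmetric_residues //= (_ : u + _ = p)%N; last by lia.
  by rewrite dvdn_add ?dvdn_mull.
- by exists C; split=> //; rewrite card_C size_cat size_symmetric_residues /=; lia.
Qed.

Section GridSizes.
Variable k : nat.
Hypotheses (p_ge7 : (7 <= p)%N) (k_ge : (p + 2 <= 3 * k)%N) (k_le : (k <= p - 3)%N).

(* Admissible sizes a+1, b+1, c+1 of the three grids: a + b + c = p + 2 is the
   degree of vdm_form for m = p - 1, the grids fit in a (k+2)-set, and the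
   top coefficient computed by cn_sum_vdm_value is nonzero. *)
Definition good_parameters (a b c : nat) : Prop :=
  [/\ (2 <= a)%N, (a < b <= k.+1)%N, (2 <= c <= k.+1)%N, (a + b + c = p + 2)%N
    & triple_discr (k%:R : 'F_p) a%:R b%:R c%:R != 0].

Lemma shift_good_parameters (a b c : nat) :
  (2 <= a)%N -> (a.+2 < b <= k.+1)%N -> (2 <= c <= k.+1)%N -> (a + b + c = p + 2)%N ->
  good_parameters a b c \/ good_parameters a.+1 b.-1 c.
Proof.
move=> a_ge /andP[ab b_le] c_bd deg.
have [b' b_eq] : exists b', b = b'.+1 by exists b.-1; lia.
subst b; set t : 'F_p := k%:R.
have shift_eq : triple_discr t a.+1%:R b'%:R c%:R - triple_discr t a%:R b'.+1%:R c%:R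
    = t ^+ 2 * (b' - a)%:R.
  have := triple_discr_shift t a%:R b'.+1%:R c%:R.
  rewrite -[b'.+1%:R]natr1 addrK !natr1 => ->; rewrite natrB; [ring | lia].
have [d0|d_nz] := eqVneq (triple_discr t a%:R b'.+1%:R c%:R) 0; last first.
  by left; split=> //; lia.
right; split; try lia.
rewrite /= (_ : triple_discr _ _ _ _ = t ^+ 2 * (b' - a)%:R); last by rewrite -shift_eq d0 subr0.
by rewrite mulf_neq0 ?expf_neq0 ?natFp_neq0 //; lia.
Qed.

(* Good parameters exist in the whole range of k: compare p with 2k, use the
   shift trick, and check the single case p = 7, k = 3 directly. *)
Lemma exists_good_parameters : exists a b c, good_parameters a b c.
Proof.
have shift a b c : (2 <= a)%N -> (a.+2 < b <= k.+1)%N -> (2 <= c <= k.+1)%N ->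
    (a + b + c = p + 2)%N -> exists a b c, good_parameters a b c.
  by move=> a_ge ab c_bd deg; case: (shift_good_parameters a_ge ab c_bd deg) => good;
    do 3 eexists; exact: good.
have [p_ge|p_lt] := leqP (2 * k + 2) p.
  by apply: (shift (p - 2 * k) k.+1 k.+1)%N; lia.
have [p_le|p_gt] := leqP p (2 * k - 1).
  by apply: (shift (p - k - 1) k.+1 2)%N; lia.
have p_odd : odd p.
  by apply/negPn/negP => /(prime_oddPn p_prime) p2; move: p_ge7; rewrite p2.
have p_eq : p = (2 * k).+1.
  have [p2k | //] : p = (2 * k)%N \/ p = (2 * k).+1 by lia.
  by move: p_odd; rewrite p2k oddM.
have [k_ge5|k_lt5] := leqP 5 k; first by apply: (shift 2 k.+1 k)%N; lia.
have k3 : k = 3%N.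
  have [//|k4] : k = 3%N \/ k = 4%N by lia.
  by move: p_prime; rewrite p_eq k4.
(* p = 7, k = 3: the discriminant of (2, 3, 4) is 4 in F_7, found by computation. *)
by exists 2%N, 3%N, 4%N; split; rewrite ?p_eq ?k3.
Qed.

(* The heart of the upper bound: every (k+2)-subset of F_p contains distinct
   x, y, g with x + y + k g = 0.  Otherwise vdm_form vanishes on grids inside A
   whose sizes are given by good parameters, while its top coefficient is a
   product of nonzero factors. *)
Lemma exists_zero_triple (A : {set 'F_p}) : #|A| = k.+2 ->
  [exists x in A, exists y in A, exists g in A,
     [&& x != y, x != g, y != g & x + y + g *+ k == 0]].
Proof.
move=> card_A; apply: contraT => no_triple.
have [a [b [c [a_ge /andP[ab b_le] /andP[c_ge c_le] deg discr_nz]]]] :=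
  exists_good_parameters.
have [A1 sA1 card_A1] := @subset_of_card _ A a.+1 (ltac:(lia)).
have [A2 sA2 card_A2] := @subset_of_card _ A b.+1 (ltac:(lia)).
have [A3 sA3 card_A3] := @subset_of_card _ A c.+1 (ltac:(lia)).
set t : 'F_p := k%:R.
have vanish : cn_sum A1 A2 A3 (vdm_form t #|'F_p|.-1) = 0.
  apply: cn_sum_vdm_vanish => x y z xA yA zA xy xz yz.
  apply/eqP => w0; apply: (negP no_triple).
  apply/existsP; exists x; rewrite (subsetP sA1 x xA); apply/existsP; exists y.
  rewrite (subsetP sA2 y yA); apply/existsP; exists z.
  by rewrite (subsetP sA3 z zA) xy xz yz -mulr_natl w0.
rewrite card_Fp // in vanish.
have value := cn_sum_vdm_value card_A1 card_A2 card_A3 t a_ge (ltnW (leq_ltn_trans a_ge ab))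
  c_ge (_ : (a + b + c = p.-1 + 3)%N).
have : (p.-1)`!%:R * t ^+ (c - 2) * ((a%:R - b%:R) * triple_discr t a%:R b%:R c%:R) != 0.
  rewrite -opprB -natrB 1?ltnW // !mulf_neq0 ?fact_pred_Fp_neq0 ?expf_neq0 ?oppr_eq0 //.
    by apply: natFp_neq0; lia.
  by apply: natFp_neq0; lia.
by rewrite -value; [rewrite vanish mul0r eqxx | have := prime_gt1 p_prime; lia].
Qed.

(* Upper bound: every (k+2)-subset of F_p has a k-barycentric subset.  After a
   translation making the sum of A zero, exists_zero_triple applies. *)
Lemma has_barycentric_card (A : {set 'F_p}) : #|A| = k.+2 -> has_barycentric k A.
Proof.
move=> card_A; set S := \sum_(x in A) x.
have k2_nz : (k.+2%:R : 'F_p) != 0 by apply: natFp_neq0; lia.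
set t := S / k.+2%:R.
have shift_inj : injective (fun x : 'F_p => x - t) by apply: addIr.
set A' := [set x - t | x in A].
have card_A' : #|A'| = k.+2 by rewrite card_imset.
case/existsP: (exists_zero_triple card_A') => _ /andP[/imsetP[x xA ->]].
case/existsP => _ /andP[/imsetP[y yA ->]] /existsP[_ /andP[/imsetP[g gA ->]]].
rewrite !(inj_eq shift_inj) => /and4P[xy xg yg /eqP w0].
apply: (has_barycentric_of_triple card_A xA yA gA xy xg yg).
have S_eq : S = t *+ k.+2 by rewrite -mulr_natr divfK.
by rewrite -/S S_eq; apply/eqP; rewrite -subr_eq0 -w0; apply/eqP; ring.
Qed.

(* Lower bound: F_p minus a zero-sum set {0} u C of size p - k has k elements
   and sum 0, so its only k-subset, itself, would need k g = 0 with g <> 0. *)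
Lemma exists_set_without_barycentric :
  exists A : {set 'F_p}, #|A| = k /\ ~~ has_barycentric k A.
Proof.
have [C [C0 card_C sum_C]] := @exists_zero_sum_set (p - 1 - k) (ltac:(lia)) (ltac:(lia)).
set A := ~: (0 |: C).
have card_A : #|A| = k by rewrite cardsCs setCK cardsU1 C0 card_C card_Fp //; lia.
have sum_A : \sum_(x in A) x = 0.
  have := sum_Fp (ltac:(lia)); rewrite (bigID (mem (0 |: C))) /= big_setU1 //= sum_C !add0r.
  by move=> sum0; rewrite -[RHS]sum0; apply: eq_bigl => x; rewrite inE.
exists A; split=> //; apply/negP => /existsP[B /andP[B_sub /andP[/eqP card_B]]].
have -> : B = A by apply/eqP; rewrite eqEcard B_sub card_B card_A /=.
case/existsP => g /andP[gA]; rewrite sum_A eq_sym -mulr_natr mulf_eq0.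
rewrite (negPf (@natFp_neq0 k _)) ?orbF; last by lia.
by move/eqP => g0; move: gA; rewrite g0 !inE eqxx.
Qed.

End GridSizes.
End PrimeField.

Local Close Scope ring_scope.

Theorem mainTheorem8 (p k : nat) (hp : prime p) (hp7 : 7 <= p)
  (hk1 : p + 2 <= 3 * k) (hk2 : k <= p - 3) :
  k + 1 <= BO 'Z_p k <= k + 2.
Proof.
(* For p prime, 'Z_p and 'F_p are the same type. *)
rewrite -(Fp_Zcast hp) /BO; case: ex_minnP => l BO_l BO_min; apply/andP; split.
- rewrite leqNgt; apply/negP => l_small.
  have [A [card_A no_bary]] := exists_set_without_barycentric hp hp7 hk1 hk2.
  have l_le : l <= #|A| by lia.
  by move/forallP/(_ A): BO_l; rewrite l_le (negPf no_bary).
- apply: BO_min; apply/forallP => A; apply/implyP => A_large.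
  have [A0 A0_sub card_A0] := @subset_of_card _ A k.+2 (ltac:(lia)).
  exact: has_barycentricS A0_sub (has_barycentric_card hp hp7 hk1 hk2 card_A0).
Qed.
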